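(* Under the standing assumptions, suppose $\varphi$ is lower semicontinuous on $X$. Let $\rho_k\to\infty$ and $\sigma_k\to0$ with $\rho_k,\sigma_k>0$, and let $x_k\in\arg\min_{x\in X}\varphi_{\rho_k,\sigma_k}(x)$ for each $k$. Then every accumulation point $\bar x$ of $\{x_k\}$ satisfies $\bar x\in\arg\min_{x\in X}\varphi(x)$. Moreover, if $x_{k_j}\to\bar x$ along a subsequence, then every accumulation point $\bar y$ of $\{y^*_{\rho_{k_j},\sigma_{k_j}}(x_{k_j})\}$ belongs to $\arg\max\{f(\bar x,y): y\in Y,\ c(\bar x,y)\le 0\}$.
   Context: Standing assumptions: $X\subset\mathbb{R}^n$ and $Y\subset\mathbb{R}^m$ are nonempty, convex and compact. $f:X\times Y\to\mathbb{R}$ is continuously differentiable with Lipschitz continuous gradient on $X\times Y$, $f(x,\cdot)$ concave on $Y$. $c=(c_1,\dots,c_p)$ has continuously differentiable components with Lipschitz gradients, each $c_i(x,\cdot)$ convex on $Y$. For every $x\in X$, $\Theta(x):=\{y\in Y: c(x,y)\le 0\}\neq\emptyset$. Notation: $[z]_+=\max\{z,0\}$ componentwise; $\varphi(x):=\max\{f(x,y): y\in\Theta(x)\}$; $\psi_{\rho,\sigma}(x,y):=f(x,y)-\frac{\rho}{2}\|[c(x,y)]_+\|^2-\frac{\sigma}{2}\|y\|^2$; $\varphi_{\rho,\sigma}(x):=\max_{y\in Y}\psi_{\rho,\sigma}(x,y)$; $y^*_{\rho,\sigma}(x)$ is the unique maximizer of $\psi_{\rho,\sigma}(x,\cdot)$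 over $Y$. *)

From HB Require Import structures.
From mathcomp Require Import all_boot all_order all_algebra.
From mathcomp Require Import all_classical all_reals all_analysis.
Set Implicit Arguments. Unset Strict Implicit. Unset Printing Implicit Defensive.
Import Order.TTheory GRing.Theory Num.Theory.
Import numFieldNormedType.Exports.
Local Open Scope classical_set_scope.
Local Open Scope ring_scope.

Section Defs.
Variable R : realType.

Definition sqnorm (m : nat) (y : 'rV[R]_m) : R := \sum_(i < m) (y ord0 i) ^+ 2.

Definition convex_on (m : nat) (S : set 'rV[R]_m) (g : 'rV[R]_m -> R) : Prop :=
  forall u v t, S u -> S v -> 0 <= t <= 1 ->
    g (t *: u + (1 - t) *: v) <= t * g u + (1 - t) * g v.

Definition concave_on (m : nat) (S : set 'rV[R]_m) (g : 'rV[R]_m -> R) : Prop :=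
  convex_on S (fun y => - g y).

(* F : R^n x R^m -> R is differentiable at every point of X x Y and its
   gradient is Lipschitz on X x Y (operator-norm form: for every direction v,
   |DF(p)v - DF(q)v| <= L |p - q| |v|). *)
Definition C11_on (n m : nat) (X : set 'rV[R]_n) (Y : set 'rV[R]_m)
    (F : 'rV[R]_n -> 'rV[R]_m -> R) : Prop :=
  let G := fun p : 'rV[R]_n * 'rV[R]_m => F p.1 p.2 in
  (forall p, X p.1 -> Y p.2 -> differentiable G p) /\
  exists L : R, forall p q v, X p.1 -> Y p.2 -> X q.1 -> Y q.2 ->
    `|'D_v G p - 'D_v G q| <= L * `|p - q| * `|v|.

Definition lsc_on (n : nat) (X : set 'rV[R]_n) (g : 'rV[R]_n -> R) : Prop :=
  forall x, X x -> forall a, a < g x -> \forall z \near x, X z -> a < g z.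

Definition Theta (n m p : nat) (Y : set 'rV[R]_m)
    (c : 'I_p -> 'rV[R]_n -> 'rV[R]_m -> R) (x : 'rV[R]_n) : set 'rV[R]_m :=
  [set y | Y y /\ forall i, c i x y <= 0].

Definition phi (n m p : nat) (Y : set 'rV[R]_m) (f : 'rV[R]_n -> 'rV[R]_m -> R)
    (c : 'I_p -> 'rV[R]_n -> 'rV[R]_m -> R) (x : 'rV[R]_n) : R :=
  sup [set f x y | y in Theta Y c x].

Definition psi (n m p : nat) (f : 'rV[R]_n -> 'rV[R]_m -> R)
    (c : 'I_p -> 'rV[R]_n -> 'rV[R]_m -> R) (rho sigma : R)
    (x : 'rV[R]_n) (y : 'rV[R]_m) : R :=
  f x y - rho / 2 * (\sum_(i < p) (Num.max (c i x y) 0) ^+ 2)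
        - sigma / 2 * sqnorm y.

Definition phi_pen (n m p : nat) (Y : set 'rV[R]_m) (f : 'rV[R]_n -> 'rV[R]_m -> R)
    (c : 'I_p -> 'rV[R]_n -> 'rV[R]_m -> R) (rho sigma : R) (x : 'rV[R]_n) : R :=
  sup [set psi f c rho sigma x y | y in Y].

(* y*_{rho,sigma}(x): the (unique, under the standing assumptions) maximizer
   of psi_{rho,sigma}(x,.) over Y *)
Definition ystar (n m p : nat) (Y : set 'rV[R]_m) (f : 'rV[R]_n -> 'rV[R]_m -> R)
    (c : 'I_p -> 'rV[R]_n -> 'rV[R]_m -> R) (rho sigma : R) (x : 'rV[R]_n)
    : 'rV[R]_m :=
  xget 0 [set y | Y y /\ forall z, Y z -> psi f c rho sigma x z <= psi f c rho sigma x y].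

Definition is_argmin (T : Type) (S : set T) (g : T -> R) (x : T) : Prop :=
  S x /\ forall z, S z -> g x <= g z.
Definition is_argmax (T : Type) (S : set T) (g : T -> R) (x : T) : Prop :=
  S x /\ forall z, S z -> g z <= g x.

Definition acc_point (T : topologicalType) (u : nat -> T) (a : T) : Prop :=
  exists k : nat -> nat, (forall j, (k j < k j.+1)%N) /\ (u \o k) @ \oo --> a.

End Defs.

From HB Require Import structures.
From mathcomp Require Import all_boot all_order all_algebra.
From mathcomp Require Import all_classical all_reals all_analysis.
From mathcomp Require Import lra.
Import Order.TTheory GRing.Theory Num.Theory.
Import numFieldNormedType.Exports.
Local Open Scope classical_set_scope.
Local Open Scope ring_scope.

(* Two estimates drive the argument, with B a bound of |y|^2 on Y. Points of
   Theta(x) carry no penalty, so phi(x) <= phi_{rho,sigma}(x) + sigma B / 2.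
   Conversely, by compactness the points of Y where f(x, .) >= phi(x) + e have
   penalty at least some d > 0, so phi_{rho,sigma}(x) <= phi(x) + e once rho is
   large. With the lower semicontinuity of phi these give the minimality of every
   limit of minimizers x_k. Along x_k -> xbar, y*_k -> ybar, the first estimate
   bounds rho_k times the penalty at (x_k, y*_k), which forces ybar into
   Theta(xbar), and it also gives phi(xbar) <= f(xbar, ybar). *)

Lemma cvg_increasing_index {k : nat -> nat} :
  (forall j, (k j < k j.+1)%N) -> k @ \oo --> \oo.
Proof.
move=> kinc P [N _ PN]; exists N => // j /= Nj; apply: PN => /=.
have k_ge : forall j, (j <= k j)%N.
  by elim=> [|i IH] //; exact: leq_ltn_trans IH (kinc i).
exact: leq_trans Nj (k_ge j).
Qed.

Section joint_continuity.
Context {U V W : topologicalType} {F : U -> V -> W} {x : U} {y : V}.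
Hypothesis cF : {for (x, y), continuous (fun q : U * V => F q.1 q.2)}.

Lemma continuous2_cvg {T} {G : set_system T} {FG : Filter G} {u : T -> U} {v : T -> V} :
  u @ G --> x -> v @ G --> y -> (fun t => F (u t) (v t)) @ G --> F x y.
Proof. by move=> ux vy; apply: (cvg_comp _ _ (cvg_pair ux vy) cF). Qed.

Lemma continuous2_slice : {for y, continuous (F x)}.
Proof. exact: (continuous2_cvg (G := nbhs y) (u := fun=> x) (cvg_cst _) cvg_id). Qed.

End joint_continuity.

Section real_functions.
Context {R : realType} {n : nat}.

Lemma lsc_on_cvg {X : set 'rV[R]_n} {g : 'rV[R]_n -> R} {T} {F : set_system T}
    {FF : Filter F} {u : T -> 'rV[R]_n} {x} :
  lsc_on X g -> X x -> (forall t, X (u t)) -> u @ F --> x ->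
  forall a, a < g x -> \forall t \near F, a < g (u t).
Proof.
move=> g_lsc Xx Xu ux a ax; near=> t.
suff : X (u t) -> a < g (u t) by apply.
by near: t; exact: ux _ (g_lsc x Xx a ax).
Unshelve. all: by end_near. Qed.

Lemma compact_argmax_rV {A : set 'rV[R]_n} {g : 'rV[R]_n -> R} :
  A !=set0 -> compact A -> (forall y, A y -> {for y, continuous g}) ->
  exists y0, is_argmax A g y0.
Proof.
move=> A0 Acpt cg; have [y0 Ay0 y0max] := EVT_max_rV A0 Acpt
  (continuous_in_subspaceT (fun y (Ay : y \in A) => cg y (set_mem Ay))).
by exists y0; split=> [|y Ay]; [exact: set_mem | apply: y0max; rewrite inE].
Qed.

Lemma compact_argmin_rV {A : set 'rV[R]_n} {g : 'rV[R]_n -> R} :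
  A !=set0 -> compact A -> (forall y, A y -> {for y, continuous g}) ->
  exists y0, is_argmin A g y0.
Proof.
move=> A0 Acpt cg; have [y0 Ay0 y0min] := EVT_min_rV A0 Acpt
  (continuous_in_subspaceT (fun y (Ay : y \in A) => cg y (set_mem Ay))).
by exists y0; split=> [|y Ay]; [exact: set_mem | apply: y0min; rewrite inE].
Qed.

Lemma sqnorm_ge0 (y : 'rV[R]_n) : 0 <= sqnorm y.
Proof. by apply: sumr_ge0 => i _; exact: sqr_ge0. Qed.

Lemma sqnorm_continuous (y : 'rV[R]_n) : {for y, continuous (@sqnorm R n)}.
Proof.
rewrite /continuous_at /sqnorm; apply: cvg_big => [||i _].
- exact: add_continuous.
- exact: nbhs_filter.
by apply: cvgM; [exact: nbhs_filter|exact: coord_continuous..].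
Qed.

End real_functions.

Section penalty_method.
Context {R : realType} {n m p : nat}.
Variables (X : set 'rV[R]_n) (Y : set 'rV[R]_m) (f : 'rV[R]_n -> 'rV[R]_m -> R)
  (c : 'I_p -> 'rV[R]_n -> 'rV[R]_m -> R).
Hypotheses (HYne : Y !=set0) (HYcpt : compact Y).
Hypotheses (Hf : C11_on X Y f) (Hc : forall i, C11_on X Y (c i)).
Hypothesis HTheta : forall x, X x -> Theta Y c x !=set0.

Definition penalty x y := \sum_(i < p) (Num.max (c i x y) 0) ^+ 2.

Lemma psiE r s x y :
  psi f c r s x y = f x y - r / 2 * penalty x y - s / 2 * sqnorm y.
Proof. by []. Qed.

Lemma penalty_ge0 x y : 0 <= penalty x y.
Proof. by apply: sumr_ge0 => i _; exact: sqr_ge0. Qed.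

Lemma penalty_Theta {x y} : Theta Y c x y -> penalty x y = 0.
Proof. by move=> [_ cxy]; apply: big1 => i _; rewrite max_r ?cxy // expr2 mulr0. Qed.

Lemma penalty_eq0_Theta {x y} : Y y -> penalty x y = 0 -> Theta Y c x y.
Proof.
move=> Yy /eqP; rewrite psumr_eq0 => [/allP pen0|i _]; last exact: sqr_ge0.
split=> // i; have /implyP/(_ isT) := pen0 i (mem_index_enum i).
by rewrite sqrf_eq0 => /eqP <-; rewrite le_max lexx.
Qed.

Lemma C11_on_continuous {F : 'rV[R]_n -> 'rV[R]_m -> R} {x y} :
  C11_on X Y F -> X x -> Y y ->
  {for (x, y), continuous (fun q : 'rV[R]_n * 'rV[R]_m => F q.1 q.2)}.
Proof. by move=> [dF _] Xx Yy; exact: differentiable_continuous (dF (x, y) Xx Yy). Qed.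

Lemma penalty_continuous {x y} : X x -> Y y ->
  {for (x, y), continuous (fun q : 'rV[R]_n * 'rV[R]_m => penalty q.1 q.2)}.
Proof.
move=> Xx Yy; rewrite /continuous_at /penalty; apply: cvg_big => [|i _].
  exact: add_continuous.
have cmax := continuous_max (C11_on_continuous (Hc i) Xx Yy) (@cst_continuous _ _ 0 (x, y)).
by apply: cvgM; exact: cmax.
Qed.

Lemma psi_continuous r s {x y} : X x -> Y y -> {for y, continuous (psi f c r s x)}.
Proof.
move=> Xx Yy.
have cf := continuous2_slice (C11_on_continuous Hf Xx Yy).
have cpen := continuous2_slice (penalty_continuous Xx Yy).
have cnorm := sqnorm_continuous y.
exact: cvgB (cvgB cf (cvgM (cvg_cst _) cpen)) (cvgM (cvg_cst _) cnorm).
Qed.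

Lemma f_bounded_above {x} : X x -> exists M, forall y, Y y -> f x y <= M.
Proof.
move=> Xx; have [y0 [_ y0max]] := compact_argmax_rV HYne HYcpt
  (fun y Yy => continuous2_slice (C11_on_continuous Hf Xx Yy)).
by exists (f x y0).
Qed.

Lemma phi_has_sup {x} : X x -> has_sup [set f x y | y in Theta Y c x].
Proof.
move=> Xx; split; first by have [z Tz] := HTheta _ Xx; exists (f x z), z.
by have [M fM] := f_bounded_above Xx; exists M => _ [y [Yy _] <-]; exact: fM.
Qed.

Lemma phi_ge {x z} : X x -> Theta Y c x z -> f x z <= phi Y f c x.
Proof. by move=> Xx Tz; apply: (sup_upper_bound (phi_has_sup Xx)); exists z. Qed.

Lemma phi_approx {x e} : X x -> 0 < e ->
  exists2 z, Theta Y c x z & phi Y f c x - e < f x z.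
Proof. by move=> Xx e0; have [_ [z Tz <-]] := sup_adherent e0 (phi_has_sup Xx); exists z. Qed.

Lemma ystarP r s {x} : X x -> is_argmax Y (psi f c r s x) (ystar Y f c r s x).
Proof.
move=> Xx; have [y0 y0max] := compact_argmax_rV HYne HYcpt
  (fun y Yy => psi_continuous r s Xx Yy).
exact: (xgetPex 0 (ex_intro _ y0 y0max)).
Qed.

Lemma phi_pen_ystar r s {x} : X x ->
  phi_pen Y f c r s x = psi f c r s x (ystar Y f c r s x).
Proof.
move=> Xx; have [Yys ysmax] := ystarP r s Xx.
set ys := ystar Y f c r s x.
have ne : [set psi f c r s x y | y in Y] !=set0 by exists (psi f c r s x ys), ys.
have ub : ubound [set psi f c r s x y | y in Y] (psi f c r s x ys).
  by move=> _ [z Yz <-]; exact: ysmax.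
apply/le_anti/andP; split; first exact: ge_sup.
by apply: sup_upper_bound; [split; [|exists (psi f c r s x ys)] | exists ys].
Qed.

Lemma psi_le_f r s x y : 0 <= r -> 0 <= s -> psi f c r s x y <= f x y.
Proof.
move=> r0 s0; rewrite psiE.
have := mulr_ge0 (divr_ge0 r0 (ler0n R 2)) (penalty_ge0 x y).
have := mulr_ge0 (divr_ge0 s0 (ler0n R 2)) (sqnorm_ge0 y).
lra.
Qed.

Variables (B : R) (HB : forall y, Y y -> sqnorm y <= B).

Lemma phi_le_psi_ystar r s {x} : X x -> 0 <= s ->
  phi Y f c x <= psi f c r s x (ystar Y f c r s x) + s / 2 * B.
Proof.
move=> Xx s0; apply/ler_addgt0Pr => e e0.
have [z [Yz cz] fz] := phi_approx Xx e0.
have pen0 : penalty x z = 0 by exact: penalty_Theta.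
have zB : s / 2 * sqnorm z <= s / 2 * B by apply: ler_wpM2l (HB _ Yz); exact: divr_ge0.
have := (ystarP r s Xx).2 z Yz; rewrite psiE pen0; lra.
Qed.

Lemma penalty_gap {x e} : X x -> 0 < e -> exists2 d, 0 < d &
  forall z, Y z -> phi Y f c x + e <= f x z -> d <= penalty x z.
Proof.
(* [q] could only vanish at a point of [Theta x] where [f x] exceeds [phi x]. *)
move=> Xx e0; pose q z := penalty x z + Num.max (phi Y f c x + e - f x z) 0.
have [y0 [Yy0 y0min]] : exists y0, is_argmin Y q y0.
  apply: compact_argmin_rV => // z Yz.
  have cf := continuous2_slice (C11_on_continuous Hf Xx Yz).
  have cgap : {for z, continuous (fun w => Num.max (phi Y f c x + e - f x w) 0)}.
    by apply: continuous_max; [exact: cvgB (cvg_cst _) cf | exact: cst_continuous].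
  exact: cvgD (continuous2_slice (penalty_continuous Xx Yz)) cgap.
exists (q y0) => [|z Yz fz].
  set g := phi Y f c x + e - f x y0.
  have g_le : g <= Num.max g 0 by rewrite le_max lexx.
  have g0_le : 0 <= Num.max g 0 by rewrite le_max lexx orbT.
  rewrite lt_neqAle addr_ge0 ?penalty_ge0 // andbT; apply/negP => /eqP/esym.
  rewrite /q -/g => q0; have pen0 : penalty x y0 = 0 by have := penalty_ge0 x y0; lra.
  have := phi_ge Xx (penalty_eq0_Theta Yy0 pen0); rewrite /g in g_le; lra.
have gap0 : Num.max (phi Y f c x + e - f x z) 0 = 0 by apply: max_r; rewrite subr_le0.
by have := y0min z Yz; rewrite {2}/q gap0 addr0.
Qed.

Lemma phi_pen_le_phi {x e} : X x -> 0 < e -> exists A, forall r s, A <= r -> 0 <= s ->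
  phi_pen Y f c r s x <= phi Y f c x + e.
Proof.
move=> Xx e0; have [d d0 gap] := penalty_gap Xx e0.
have [M fM] := f_bounded_above Xx.
exists (Num.max 0 (2 * (M - phi Y f c x) / d)) => r s; rewrite ge_max => /andP[r0 rA] s0.
rewrite phi_pen_ystar //; set z := ystar Y f c r s x.
have Yz := (ystarP r s Xx).1; have := psi_le_f r s x z r0 s0.
have [fz|fz] := ltP (f x z) (phi Y f c x + e); first lra.
have rd : 2 * (M - phi Y f c x) <= r * d by rewrite -ler_pdivrMr.
have := gap z Yz fz; have := fM z Yz; rewrite psiE.
have := mulr_ge0 (divr_ge0 s0 (ler0n R 2)) (sqnorm_ge0 z).
nra.
Qed.

Section sequences.
Variables (r s : nat -> R).
Hypotheses (Hr0 : forall j, 0 <= r j) (Hs0 : forall j, 0 <= s j).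
Hypotheses (Hr : r @ \oo --> +oo) (Hs : s @ \oo --> 0).
Hypotheses (HXcl : closed X) (Hlsc : lsc_on X (phi Y f c)).
Variables (xs : nat -> 'rV[R]_n) (xbar : 'rV[R]_n).
Hypotheses (Xxs : forall j, X (xs j)) (xs_cvg : xs @ \oo --> xbar).

Lemma smoothing_error_cvg0 : (fun j => s j / 2 * B) @ \oo --> 0.
Proof.
rewrite -(mul0r B) -(mul0r (2^-1 : R)).
by apply: cvgMl; apply: cvgMl.
Qed.

Lemma limit_in_X : X xbar.
Proof. by apply: (closed_cvg X HXcl _ xbar xs_cvg); exact: nearW. Qed.

Lemma limit_argmin : (forall j, is_argmin X (phi_pen Y f c (r j) (s j)) (xs j)) ->
  is_argmin X (phi Y f c) xbar.
Proof.
move=> xs_min; split=> [|z Xz]; first exact: limit_in_X.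
apply/ler_addgt0Pr => e e0; have e3 : 0 < e / 3 by apply: divr_gt0.
have [A phi_penA] := phi_pen_le_phi Xz e3.
have phi_lb := lsc_on_cvg Hlsc limit_in_X Xxs xs_cvg (phi Y f c xbar - e / 3).
have r_large : \forall j \near \oo, A <= r j by move/cvgryPge: Hr; apply.
have error_small : \forall j \near \oo, s j / 2 * B < e / 3.
  exact: cvgr_lt smoothing_error_cvg0 _ e3.
suff : \forall j \near \oo, phi Y f c xbar <= phi Y f c z + e by move/filter_ex => [].
near=> j.
have := phi_le_psi_ystar (r j) (s j) (Xxs j) (Hs0 j); rewrite -phi_pen_ystar //.
have := (xs_min j).2 z Xz.
have rA : A <= r j by near: j; exact: r_large.
have := phi_penA (r j) (s j) rA (Hs0 j).
have : phi Y f c xbar - e / 3 < phi Y f c (xs j).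
  by near: j; apply: phi_lb; lra.
have : s j / 2 * B < e / 3 by near: j; exact: error_small.
lra.
Unshelve. all: by end_near.
Qed.

Variable ybar : 'rV[R]_m.
Let ys j := ystar Y f c (r j) (s j) (xs j).
Hypothesis ys_cvg : ys @ \oo --> ybar.

Lemma limit_in_Y : Y ybar.
Proof.
have Ycl : closed Y := compact_closed (@norm_hausdorff _ _) HYcpt.
by apply: (closed_cvg Y Ycl _ ybar ys_cvg); apply: nearW => j; exact: (ystarP _ _ (Xxs j)).1.
Qed.

Lemma f_cvg : (fun j => f (xs j) (ys j)) @ \oo --> f xbar ybar.
Proof. exact: (continuous2_cvg (C11_on_continuous Hf limit_in_X limit_in_Y) xs_cvg ys_cvg). Qed.

Lemma scaled_penalty_bounded : \forall j \near \oo,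
  r j / 2 * penalty (xs j) (ys j) <= f xbar ybar - phi Y f c xbar + 3.
Proof.
have f_ub := cvgr_lt _ f_cvg (f xbar ybar + 1) ltac:(lra).
have phi_lb := lsc_on_cvg Hlsc limit_in_X Xxs xs_cvg (phi Y f c xbar - 1) ltac:(lra).
have error_small : \forall j \near \oo, s j / 2 * B < 1.
  exact: cvgr_lt smoothing_error_cvg0 _ ltr01.
near=> j.
have := phi_le_psi_ystar (r j) (s j) (Xxs j) (Hs0 j); rewrite psiE -/(ys j).
have := mulr_ge0 (divr_ge0 (Hs0 j) (ler0n R 2)) (sqnorm_ge0 (ys j)).
have : f (xs j) (ys j) < f xbar ybar + 1 by near: j; exact: f_ub.
have : phi Y f c xbar - 1 < phi Y f c (xs j) by near: j; exact: phi_lb.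
have : s j / 2 * B < 1 by near: j; exact: error_small.
lra.
Unshelve. all: by end_near.
Qed.

Lemma limit_feasible : Theta Y c xbar ybar.
Proof.
apply: (penalty_eq0_Theta limit_in_Y); apply/le_anti; rewrite penalty_ge0 andbT.
apply/ler_addgt0Pr => e e0; rewrite add0r.
have pen_cvg : (fun j => penalty (xs j) (ys j)) @ \oo --> penalty xbar ybar.
  exact: (continuous2_cvg (penalty_continuous limit_in_X limit_in_Y) xs_cvg ys_cvg).
apply: (closed_cvg _ (@closed_le _ e) _ _ pen_cvg).
set C := f xbar ybar - phi Y f c xbar + 3.
have r_large : \forall j \near \oo, 2 * C / e < r j by move/cvgryPgt: Hr; apply.
near=> j.
have : 2 * C < r j * e by rewrite -ltr_pdivrMr //; near: j; exact: r_large.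
have : r j / 2 * penalty (xs j) (ys j) <= C by near: j; exact: scaled_penalty_bounded.
have := penalty_ge0 (xs j) (ys j); have := Hr0 j.
rewrite /=; nra.
Unshelve. all: by end_near.
Qed.

Lemma limit_value : phi Y f c xbar <= f xbar ybar.
Proof.
apply/ler_addgt0Pr => e e0; have e3 : 0 < e / 3 by apply: divr_gt0.
have f_ub := cvgr_lt _ f_cvg (f xbar ybar + e / 3) ltac:(lra).
have phi_lb := lsc_on_cvg Hlsc limit_in_X Xxs xs_cvg (phi Y f c xbar - e / 3) ltac:(lra).
have error_small : \forall j \near \oo, s j / 2 * B < e / 3.
  exact: cvgr_lt smoothing_error_cvg0 _ e3.
suff : \forall j \near \oo, phi Y f c xbar <= f xbar ybar + e by move/filter_ex => [].
near=> j.
have := phi_le_psi_ystar (r j) (s j) (Xxs j) (Hs0 j).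
have := psi_le_f (r j) (s j) (xs j) (ys j) (Hr0 j) (Hs0 j); rewrite -/(ys j).
have : f (xs j) (ys j) < f xbar ybar + e / 3 by near: j; exact: f_ub.
have : phi Y f c xbar - e / 3 < phi Y f c (xs j) by near: j; exact: phi_lb.
have : s j / 2 * B < e / 3 by near: j; exact: error_small.
lra.
Unshelve. all: by end_near.
Qed.

Lemma limit_argmax : is_argmax (Theta Y c xbar) (f xbar) ybar.
Proof.
split=> [|z Tz]; first exact: limit_feasible.
exact: le_trans (phi_ge limit_in_X Tz) limit_value.
Qed.

End sequences.

End penalty_method.

Theorem theorem2p4 (R : realType) (n m p : nat)
    (X : set 'rV[R]_n) (Y : set 'rV[R]_m)
    (f : 'rV[R]_n -> 'rV[R]_m -> R)
    (c : 'I_p -> 'rV[R]_n -> 'rV[R]_m -> R)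
    (HXne : X !=set0) (HXcvx : convex_set X) (HXcpt : compact X)
    (HYne : Y !=set0) (HYcvx : convex_set Y) (HYcpt : compact Y)
    (Hf : C11_on X Y f)
    (Hfconc : forall x, X x -> concave_on Y (f x))
    (Hc : forall i, C11_on X Y (c i))
    (Hccvx : forall i x, X x -> convex_on Y (c i x))
    (HTheta : forall x, X x -> Theta Y c x !=set0)
    (Hlsc : lsc_on X (phi Y f c))
    (rho sigma : nat -> R) (xs : nat -> 'rV[R]_n)
    (Hrho_pos : forall k, 0 < rho k) (Hsigma_pos : forall k, 0 < sigma k)
    (Hrho : rho @ \oo --> +oo) (Hsigma : sigma @ \oo --> 0)
    (Hxs : forall k, is_argmin X (phi_pen Y f c (rho k) (sigma k)) (xs k)) :
  (forall xbar, acc_point xs xbar -> is_argmin X (phi Y f c) xbar) /\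
  (forall (kj : nat -> nat) (xbar : 'rV[R]_n),
      (forall j, (kj j < kj j.+1)%N) -> (xs \o kj) @ \oo --> xbar ->
      forall ybar,
        acc_point (fun j => ystar Y f c (rho (kj j)) (sigma (kj j)) (xs (kj j))) ybar ->
        is_argmax (Theta Y c xbar) (f xbar) ybar).
Proof.
have [y0 [_ HB]] := compact_argmax_rV HYne HYcpt (fun y _ => sqnorm_continuous y).
have HXcl : closed X := compact_closed (@norm_hausdorff _ _) HXcpt.
have Hrho0 k : 0 <= rho k := ltW (Hrho_pos k).
have Hsigma0 k : 0 <= sigma k := ltW (Hsigma_pos k).
split=> [xbar [k [kinc xs_k]] | kj xbar kjinc xs_kj ybar [l [linc ys_l]]].
  have k_oo := cvg_increasing_index kinc.
  exact: (limit_argmin X Y f c HYne HYcpt Hf Hc HTheta _ HB (rho \o k) (sigma \o k)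
    (fun j => Hsigma0 (k j)) (cvg_comp _ _ k_oo Hrho) (cvg_comp _ _ k_oo Hsigma)
    HXcl Hlsc _ _ (fun j => (Hxs (k j)).1) xs_k (fun j => Hxs (k j))).
have kj_oo := cvg_increasing_index kjinc; have l_oo := cvg_increasing_index linc.
pose kl := kj \o l.
exact: (limit_argmax X Y f c HYne HYcpt Hf Hc HTheta _ HB (rho \o kl) (sigma \o kl)
  (fun j => Hrho0 (kl j)) (fun j => Hsigma0 (kl j))
  (cvg_comp _ _ l_oo (cvg_comp _ _ kj_oo Hrho))
  (cvg_comp _ _ l_oo (cvg_comp _ _ kj_oo Hsigma)) HXcl Hlsc
  _ _ (fun j => (Hxs (kl j)).1) (cvg_comp _ _ l_oo xs_kj) _ ys_l).
Qed.
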